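(* Let $0\le k<n$ be integers and let $\nu$ be a partition which is balanced as a straight shape with height and width both equal to $k$. (1) Let $\lambda:=\delta_n+\nu$. Then $[\varnothing,\lambda]_{\mathrm{shift}}$ is tCDE with $\mathbb{E}(\mathrm{uni}_{[\varnothing,\lambda]_{\mathrm{shift}}};\mathrm{ddeg})=\frac{n+1+k}{4}$. (2) Let $\lambda:=\delta_n+\nu+(n-1-k)^n$. Then $[\varnothing,\lambda]_{\mathrm{shift}}$ is tCDE with $\mathbb{E}(\mathrm{uni}_{[\varnothing,\lambda]_{\mathrm{shift}}};\mathrm{ddeg})=\frac{n}{2}$.
   Context: Partitions are weakly decreasing, eventually zero sequences of nonnegative integers; sums are componentwise: $(\mu+\nu)_i=\mu_i+\nu_i$. $\delta_n=(n,n-1,\ldots,1)$ and $b^a=(b,\ldots,b)$ ($a$ parts). A partition $\nu$ is balanced as a straight shape with height and width $k$ if $\ell(\nu)=\nu_1=k$ (or $\nu=\varnothing$ when $k=0$) and for every $1\le i\le k-1$ with $\nu_i>\nu_{i+1}$ one has $i+\nu_{i+1}=k$ (i.e., every outward corner of its Young diagram lies on the anti-diagonal of the $k\times k$ square). A strict partition has $\lambda_i>\lambda_{i+1}$ whenever $\lambda_i\neq 0$. The shifted Young's lattice is the set of strict partitions ordered by $\mu\subseteq\lambda$ iff $\mu_i\le\lambda_i$ for all $i$; $[\varnothing,\lambda]_{\mathrm{shift}}$ is its interval. It is a distributive lattice: $[\varnothing,\lambda]_{\mathrm{shift}}\cong J(P^{\mathrm{shift}}_\lambda)$, where $P^{\mathrm{shift}}_\lambda$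 is the set of boxes $[i,j]$ with $1\le i\le\ell(\lambda)$, $i\le j\le i+\lambda_i-1$, ordered by $[i,j]\le[i',j']$ iff $i\le i'$ and $j\le j'$, and $J(\cdot)$ denotes the lattice of order ideals. $\mathrm{ddeg}$ is the number of covered elements; $\mathrm{uni}$ is uniform. For $p\in P$ and order ideal $I$: $\mathcal{T}^+_p(I)=1$ iff $p\notin I$ and $p$ is minimal in $P\setminus I$; $\mathcal{T}^-_p(I)=1$ iff $p\in I$ and $p$ is maximal in $I$. A distribution $\mu$ on $J(P)$ is toggle-symmetric if $\mathbb{E}(\mu;\mathcal{T}^+_p)=\mathbb{E}(\mu;\mathcal{T}^-_p)$ for all $p$; $J(P)$ is tCDE if $\mathbb{E}(\mu;\mathrm{ddeg})=\mathbb{E}(\mathrm{uni}_{J(P)};\mathrm{ddeg})$ for every toggle-symmetric $\mu$. *)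

From HB Require Import structures.
From mathcomp Require Import all_boot all_order all_algebra.
Set Implicit Arguments. Unset Strict Implicit. Unset Printing Implicit Defensive.
Import Order.TTheory GRing.Theory Num.Theory.

(* ---------- Partitions, represented as finite sequences of nats.
   Part lambda_i (1-based) is  nth 0 lambda (i-1); trailing zeros allowed. *)

Definition part (s : seq nat) (i : nat) : nat := nth 0 s i.-1.

Definition is_partition (s : seq nat) : bool := sorted geq s.

Definition padd (s t : seq nat) : seq nat :=
  mkseq (fun i => nth 0 s i + nth 0 t i) (maxn (size s) (size t)).

Definition delta (n : nat) : seq nat := mkseq (fun i => n - i) n.

(* b^a = (b, ..., b) with a parts *)
Definition rect (b a : nat) : seq nat := nseq a b.

Definition plength (s : seq nat) : nat := count (fun x => 0 < x) s.

Definition balanced (nu : seq nat) (k : nat) : bool :=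
  [&& is_partition nu, plength nu == k, part nu 1 == k &
      all (fun i => (part nu i > part nu i.+1) ==> (i + part nu i.+1 == k))
          (iota 1 k.-1)].

Definition shifted_boxes (lam : seq nat) : seq (nat * nat) :=
  [seq (i, j) | i <- iota 1 (size lam), j <- iota i (part lam i)].

Definition shiftP (lam : seq nat) : finType := seq_sub (shifted_boxes lam).

Definition shift_le (lam : seq nat) : rel (shiftP lam) :=
  fun x y => ((ssval x).1 <= (ssval y).1) && ((ssval x).2 <= (ssval y).2).

Section Poset.
Variables (T : finType) (le : rel T).

Definition is_ideal (I : {set T}) : bool :=
  [forall x, forall y, ((y \in I) && le x y) ==> (x \in I)].

Definition ideals : {set {set T}} := [set I | is_ideal I].

Definition togp (p : T) (I : {set T}) : bool :=
  (p \notin I) && [forall q, ((q \notin I) && le q p) ==> (q == p)].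

Definition togm (p : T) (I : {set T}) : bool :=
  (p \in I) && [forall q, ((q \in I) && le p q) ==> (q == p)].

Definition covers_in_J (J I : {set T}) : bool :=
  [&& J \in ideals, I \in ideals, J \proper I &
      [forall K in ideals, ~~ ((J \proper K) && (K \proper I))]].

Definition ddeg (I : {set T}) : nat := #|[set J | covers_in_J J I]|.

Variable R : realFieldType.
Local Open Scope ring_scope.

Definition is_distribution (mu : {set T} -> R) : Prop :=
  (forall I, I \in ideals -> 0 <= mu I) /\ \sum_(I in ideals) mu I = 1.

Definition expect (mu : {set T} -> R) (f : {set T} -> R) : R :=
  \sum_(I in ideals) mu I * f I.

Definition uni : {set T} -> R := fun _ => (#|ideals|%:R)^-1.

Definition toggle_symmetric (mu : {set T} -> R) : Prop :=
  forall p : T, expect mu (fun I => (togp p I)%:R) = expect mu (fun I => (togm p I)%:R).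

Definition tCDE : Prop :=
  forall mu, is_distribution mu -> toggle_symmetric mu ->
    expect mu (fun I => (ddeg I)%:R) = expect uni (fun I => (ddeg I)%:R).

End Poset.

From HB Require Import structures.
From mathcomp Require Import all_boot all_order all_algebra.
From mathcomp Require Import zify ring lra.
Import Order.TTheory GRing.Theory Num.Theory.

Set Implicit Arguments.
Unset Strict Implicit.
Unset Printing Implicit Defensive.

(* A toggle-symmetric distribution gives [E(T^+_p - T^-_p) = 0] for every [p],
   so tCDE with mean [c] follows from an identity
   [ddeg I = c + sum_p w_p (T^+_p I - T^-_p I)] valid for every order ideal [I].
   The down-degree of [I] counts the maximal elements of [I].  In a strict
   shifted shape an order ideal is determined by its row lengths [m_i], and each
   row has at most one removable and one addable box.  Take
   [w_(i,j) = (i + j - lambda_1 - 2) / 2] for [i < j] and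
   [w_(i,i) = (2 i - lambda_1 - 3) / 4].  Then the contributions of consecutive
   rows to [4 (ddeg I - sum_p w_p (T^+_p I - T^-_p I))] telescope against the
   potential [2 (i + m_i)] (or [lambda_1 + 1] for an empty row), leaving
   [c = (lambda_1 + 1) / 4]; the antidiagonal conditions on [lambda] are exactly
   what makes every step telescope.  Both shapes of the theorem satisfy them,
   with [lambda_1 = n + k] and [lambda_1 = 2 n - 1]. *)

Lemma sumr_indicator (R : nzSemiRingType) (T : finType) (A : {pred T}) (b : pred T) :
  (\sum_(x in A) (b x)%:R = #|[set x in A | b x]|%:R :> R)%R.
Proof.
rewrite -sum1_card natr_sum big_mkcond [RHS]big_mkcond /=.
by apply: eq_bigr => x _; rewrite inE; case: (x \in A); case: (b x).
Qed.

Section OrderIdeals.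
Variables (T : finType) (le : rel T).

Lemma idealP (I : {set T}) :
  reflect (forall x y, y \in I -> le x y -> x \in I) (is_ideal le I).
Proof.
apply: (iffP forallP) => [H x y yI lxy | H x].
  by move: (H x) => /forallP /(_ y) /implyP; apply; rewrite yI.
by apply/forallP => y; apply/implyP => /andP [yI lxy]; exact: H yI lxy.
Qed.

Lemma togmP p (I : {set T}) :
  reflect (p \in I /\ forall q, q \in I -> le p q -> q = p) (togm le p I).
Proof.
apply: (iffP andP) => [[pI /forallP H] | [pI H]]; split => //.
  by move=> q qI lpq; move: (H q); rewrite qI lpq => /eqP.
by apply/forallP => q; apply/implyP => /andP [qI lpq]; rewrite (H q qI lpq).
Qed.

Lemma togpP p (I : {set T}) :
  reflect (p \notin I /\ forall q, q \notin I -> le q p -> q = p) (togp le p I).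
Proof.
apply: (iffP andP) => [[pI /forallP H] | [pI H]]; split => //.
  by move=> q qI lqp; move: (H q); rewrite qI lqp => /eqP.
by apply/forallP => q; apply/implyP => /andP [qI lqp]; rewrite (H q qI lqp).
Qed.

Lemma set0_in_ideals : set0 \in ideals le.
Proof. by rewrite inE; apply/idealP => x y; rewrite inE. Qed.

Lemma ideal_setD1 I p : is_ideal le I -> togm le p I -> is_ideal le (I :\ p).
Proof.
move=> /idealP iI /togmP [pI mp]; apply/idealP => x y.
rewrite !in_setD1 => /andP [yp yI] lxy; rewrite (iI x y yI lxy) andbT.
by apply/eqP => exp; move: yp; rewrite (mp y yI) ?eqxx // -exp.
Qed.

Lemma ideal_setU1 I p : is_ideal le I -> togp le p I -> is_ideal le (p |: I).
Proof.
move=> /idealP iI /togpP [pI mp]; apply/idealP => x y.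
rewrite !in_setU1 => /orP [/eqP -> lxp | yI lxy]; last by rewrite (iI x y yI lxy) orbT.
by case xI: (x \in I); rewrite ?orbT // (mp x) ?xI ?eqxx.
Qed.

Lemma togm_setU1 I p : is_ideal le I -> togp le p I -> togm le p (p |: I).
Proof.
move=> /idealP iI /togpP [pI _]; apply/togmP; split; first by rewrite setU11.
move=> q; rewrite in_setU1 => /orP [/eqP -> // | qI lpq].
by move: pI; rewrite (iI p q qI lpq).
Qed.

Lemma togp_setD1 I p : is_ideal le I -> togm le p I -> togp le p (I :\ p).
Proof.
move=> /idealP iI /togmP [pI _]; apply/togpP; split; first by rewrite setD11.
move=> q; rewrite in_setD1 negb_and negbK => /orP [/eqP -> // | qI lqp].
by move: qI; rewrite (iI q p pI lqp).
Qed.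

(* Adding and removing [p] are inverse bijections between the two sets. *)
Lemma card_togp_togm p :
  #|[set I in ideals le | togp le p I]| = #|[set I in ideals le | togm le p I]|.
Proof.
apply/eqP; rewrite eqn_leq; apply/andP; split.
- rewrite -(@card_in_imset _ _ (fun I => p |: I)).
    apply: subset_leq_card; apply/subsetP => J /imsetP [I].
    by rewrite !inE => /andP [iI tI] ->; rewrite ideal_setU1 ?togm_setU1.
  move=> I J; rewrite !inE => /andP [_ /togpP [pI _]] /andP [_ /togpP [pJ _]] E.
  by rewrite -(setU1K pI) E setU1K.
- rewrite -(@card_in_imset _ _ (fun I => I :\ p)).
    apply: subset_leq_card; apply/subsetP => J /imsetP [I].
    by rewrite !inE => /andP [iI tI] ->; rewrite ideal_setD1 ?togp_setD1.
  move=> I J; rewrite !inE => /andP [_ /togmP [pI _]] /andP [_ /togmP [pJ _]] E.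
  by rewrite -(setD1K pI) E setD1K.
Qed.

Section Ranked.
Variable rank : T -> nat.
Hypothesis rank_lt : forall x y, le x y -> x != y -> rank x < rank y.

Lemma covers_in_J_togm J I : I \in ideals le ->
  covers_in_J le J I -> exists2 p, togm le p I & J = I :\ p.
Proof.
move=> Iid /and4P [Jid _ JI /forallP noK].
move: Iid Jid; rewrite !inE => /idealP iI /idealP iJ.
have [p0 p0IJ] : exists p0, p0 \in I :\: J.
  by move/properP: JI => [_ [x xI xJ]]; exists x; rewrite inE xI xJ.
have [p pIJ p_min] := arg_minnP rank p0IJ.
have /setDP [pI pJ] := pIJ.
(* a rank-minimal element of [I :\: J] can be added to [J] *)
have pJ_ideal : is_ideal le (p |: J).
  apply/idealP => x y; rewrite in_setU1 => /orP [/eqP -> lxp | yJ lxy].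
    rewrite in_setU1; case xJ: (x \in J); first by rewrite orbT.
    have [// | xp] := eqVneq x p.
    have : x \in I :\: J by rewrite inE xJ (iI x p pI lxp).
    by move/p_min; rewrite leqNgt (rank_lt lxp xp).
  by apply/setU1P; right; exact: iJ yJ lxy.
have pJ_eq : p |: J = I.
  have JpJ : J \proper p |: J.
    by apply/properP; split; [exact: subsetUr | exists p; rewrite ?setU11].
  have pJI : p |: J \subset I.
    by apply/subsetP => x; rewrite in_setU1 => /orP [/eqP -> // | /(subsetP (proper_sub JI))].
  apply/eqP; rewrite eqEproper pJI /=.
  by move: (noK (p |: J)); rewrite inE pJ_ideal JpJ.
exists p; last by rewrite -pJ_eq setU1K.
apply/togmP; split => // q qI lpq; apply/eqP; apply: contraT => qp.
by move: qI pJ; rewrite -pJ_eq in_setU1 (negbTE qp) => /(iJ p q) ->.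
Qed.

Lemma togm_covers_in_J I p : I \in ideals le -> togm le p I -> covers_in_J le (I :\ p) I.
Proof.
move=> Iid tp; have /togmP [pI _] := tp.
apply/and4P; split => //.
- by rewrite inE ideal_setD1 //; move: Iid; rewrite inE.
- exact: properD1.
- apply/forallP => K; apply/implyP => _; apply/negP => /andP [/proper_card c1 /proper_card c2].
  by move: (cardsD1 p I) c1 c2; rewrite pI add1n => -> /leq_ltn_trans /[apply]; rewrite ltnn.
Qed.

Lemma ddeg_card_togm I : I \in ideals le -> ddeg le I = #|[set p | togm le p I]|.
Proof.
move=> Iid; rewrite /ddeg.
have -> : [set J | covers_in_J le J I] = (fun p => I :\ p) @: [set p | togm le p I].
  apply/setP => J; rewrite inE; apply/idP/imsetP.
    by move/(covers_in_J_togm Iid) => [p tp ->]; exists p; rewrite ?inE.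
  by move=> [p]; rewrite inE => tp ->; exact: togm_covers_in_J.
rewrite card_in_imset // => p q; rewrite !inE => /togmP [pI _] /togmP [qI _] E.
apply/eqP; apply: contraT => pq.
by move: (setD11 q I); rewrite -E in_setD1 eq_sym pq qI.
Qed.

End Ranked.

Variable R : realFieldType.
Local Open Scope ring_scope.

Lemma uni_distribution : is_distribution le (uni le R).
Proof.
have ideals_gt0 : (0 < #|ideals le|)%N by apply/card_gt0P; exists set0; exact: set0_in_ideals.
split; first by move=> I _; rewrite /uni invr_ge0 ler0n.
rewrite /uni sumr_const; set N := (#|ideals le|%:R : R).
by rewrite -mulr_natr mulVf // /N pnatr_eq0 -lt0n.
Qed.

Lemma uni_toggle_symmetric : toggle_symmetric le (uni le R).
Proof. by move=> p; rewrite /expect -!mulr_sumr !sumr_indicator card_togp_togm. Qed.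

(* Toggle symmetry kills the expectation of every combination of [togp p - togm p]. *)
Lemma tCDE_of_toggle_identity (w : T -> R) (c : R) :
  (forall I, I \in ideals le -> (ddeg le I)%:R
     = c + \sum_p w p * ((togp le p I)%:R - (togm le p I)%:R)) ->
  tCDE le R /\ expect le (uni le R) (fun I => (ddeg le I)%:R) = c.
Proof.
move=> ddegE.
have expect_ddeg mu : is_distribution le mu -> toggle_symmetric le mu ->
    expect le mu (fun I => (ddeg le I)%:R) = c.
  move=> [_ mu1] mu_sym; rewrite /expect.
  rewrite (eq_bigr (fun I => mu I * c +
      \sum_p w p * (mu I * (togp le p I)%:R - mu I * (togm le p I)%:R))); last first.
    move=> I Iid; rewrite ddegE // mulrDr mulr_sumr; congr (_ + _).
    by apply: eq_bigr => p _; rewrite mulrCA mulrBr.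
  rewrite big_split /= -mulr_suml mu1 mul1r exchange_big big1 ?addr0 // => p _.
  by rewrite -mulr_sumr sumrB; move: (mu_sym p); rewrite /expect => ->; rewrite subrr mulr0.
have uni_ddeg := expect_ddeg _ uni_distribution uni_toggle_symmetric.
by split => // mu mu_dist mu_sym; rewrite uni_ddeg; exact: expect_ddeg.
Qed.

End OrderIdeals.

Lemma count_iota_downclosed (P : pred nat) a l :
  (forall j, P j -> a <= j < a + l) ->
  (forall j j', a <= j' <= j -> P j -> P j') ->
  forall j, P j = (a <= j < a + count P (iota a l)).
Proof.
elim: l => [|l IH] P_in P_down j.
  by apply/idP/idP => [/P_in|]; rewrite /= !addn0; lia.
rewrite -[l.+1]addn1 iotaD count_cat /= addn0.
have [Pl | nPl] := boolP (P (a + l)).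
  have -> : count P (iota a l) = l.
    rewrite -[RHS](size_iota a l) -count_predT; apply: eq_in_count => x.
    by rewrite mem_iota => x_in; apply: (P_down (a + l)) => //; lia.
  by apply/idP/idP => [/P_in | j_in]; [lia | apply: (P_down (a + l)) => //; lia].
rewrite addn0; apply: IH => // j' Pj'.
have [ej' | nej'] := eqVneq j' (a + l); first by move: Pj'; rewrite ej' (negbTE nPl).
by have := P_in _ Pj'; lia.
Qed.

Section ShiftedShape.
Variable lam : seq nat.
Local Notation lp := (part lam).

Definition shifted_box (b : nat * nat) : bool :=
  [&& 0 < b.1, b.1 <= b.2 & b.2 < b.1 + lp b.1].

Lemma mem_shifted_boxes b : (b \in shifted_boxes lam) = shifted_box b.
Proof.
apply/allpairsPdep/idP => [[i [j [hi hj ->]]] | ].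
  by move: hi hj; rewrite !mem_iota /shifted_box /=; lia.
case: b => i j; rewrite /shifted_box /= => hij.
have i_size : i.-1 < size lam.
  by rewrite ltnNge; apply/negP => /(nth_default 0); rewrite /part in hij; lia.
by exists i, j; rewrite !mem_iota; split => //; lia.
Qed.

Lemma uniq_shifted_boxes : uniq (shifted_boxes lam).
Proof.
apply: allpairs_uniq_dep; first exact: iota_uniq.
  by move=> i _; exact: iota_uniq.
by move=> [a b] [c d] _ _ /= [-> ->].
Qed.

Lemma sum_shiftP (V : nmodType) (F : nat * nat -> V) :
  (\sum_(q : shiftP lam) F (ssval q) =
   \sum_(i <- iota 1 (size lam)) \sum_(j <- iota i (lp i)) F (i, j))%R.
Proof.
transitivity (\sum_(b <- shifted_boxes lam) F b)%R.
  by rewrite -[in RHS](val_seq_sub_enum uniq_shifted_boxes) big_map /index_enum !unlock.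
by rewrite /shifted_boxes big_allpairs_dep.
Qed.

Hypothesis lam_strict : forall i, 0 < i -> 0 < lp i.+1 -> lp i.+1 < lp i.

Lemma row_end_nonincr i i' : 0 < i -> i <= i' -> 0 < lp i' -> i' + lp i' <= i + lp i.
Proof.
move=> i_gt0 /subnK <-; elim: (i' - i) => [|d IH] lp_gt0; first by rewrite add0n.
rewrite addSn in lp_gt0 *.
have lt_row : lp (d + i).+1 < lp (d + i) by apply: lam_strict => //; lia.
by have := IH (leq_ltn_trans (leq0n _) lt_row); lia.
Qed.

Variable I : {set shiftP lam}.
Hypothesis I_ideal : is_ideal (@shift_le lam) I.

Definition in_ideal (b : nat * nat) : bool := [exists q in I, ssval q == b].

Lemma in_ideal_box b : in_ideal b -> shifted_box b.
Proof. by case/existsP => q /andP [_ /eqP <-]; rewrite -mem_shifted_boxes ssvalP. Qed.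

Lemma in_ideal_val q : in_ideal (ssval q) = (q \in I).
Proof.
apply/existsP/idP => [[q' /andP [q'I /eqP e]] | qI]; last by exists q; rewrite qI eqxx.
by rewrite (_ : q = q') //; apply: val_inj; rewrite /= e.
Qed.

Lemma in_ideal_down b b' :
  in_ideal b -> shifted_box b' -> b'.1 <= b.1 -> b'.2 <= b.2 -> in_ideal b'.
Proof.
case/existsP => q /andP [qI /eqP qb] b'_box le1 le2.
have b'_in : b' \in shifted_boxes lam by rewrite mem_shifted_boxes.
apply/existsP; exists (SeqSub b'_in); rewrite eqxx andbT.
by apply: (idealP _ _ I_ideal _ q qI); rewrite /shift_le /= qb le1 le2.
Qed.

Definition row_length i := count (fun j => in_ideal (i, j)) (iota i (lp i)).

Lemma in_idealE i j : in_ideal (i, j) = (0 < i) && (i <= j < i + row_length i).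
Proof.
have [-> | i_gt0] := posnP i.
  by apply/negbTE/negP => /in_ideal_box; rewrite /shifted_box.
apply: (count_iota_downclosed (P := fun j => in_ideal (i, j))).
  by move=> j' /in_ideal_box; rewrite /shifted_box /=; lia.
move=> j1 j' hj in1; have := in_ideal_box in1; rewrite /shifted_box /= => hb.
by apply: (in_ideal_down in1) => //; rewrite /shifted_box /=; lia.
Qed.

Lemma row_length_le i : row_length i <= lp i.
Proof. by rewrite -[X in _ <= X](size_iota i) count_size. Qed.

Lemma row_length_decr i : 0 < i -> 0 < row_length i.+1 -> row_length i.+1 < row_length i.
Proof.
move=> i_gt0 len_gt0.
have last_in : in_ideal (i.+1, i + row_length i.+1) by rewrite in_idealE; lia.
have lp_lt := lam_strict i_gt0 (leq_trans len_gt0 (row_length_le i.+1)).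
have := in_ideal_box last_in; rewrite /shifted_box /= => hb.
have : in_ideal (i, i + row_length i.+1).
  by apply: (in_ideal_down last_in) => //; rewrite /shifted_box /=; lia.
by rewrite in_idealE; lia.
Qed.

Lemma togm_shiftE q : togm (@shift_le lam) q I =
  [&& in_ideal (ssval q), ~~ in_ideal ((ssval q).1, (ssval q).2.+1)
    & ~~ in_ideal ((ssval q).1.+1, (ssval q).2)].
Proof.
case hq: (ssval q) => [i j] /=.
have : shifted_box (i, j) by rewrite -hq -mem_shifted_boxes ssvalP.
rewrite /shifted_box /= => q_box.
apply/togmP/idP => [[qI q_max] | /and3P [qI right_out below_out]].
  rewrite -hq in_ideal_val qI /=.
  by apply/andP; split; apply/negP => /existsP [q' /andP [q'I /eqP e]];
    move: (q_max q' q'I); rewrite /shift_le e hq /= leqnn leqnSn => /(_ isT) eq;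
    move: e; rewrite eq hq => -[]; lia.
split; first by rewrite -in_ideal_val hq.
move=> q' q'I; rewrite /shift_le hq /=.
case hq': (ssval q') => [i' j'] /= /andP [le_i le_j].
have : shifted_box (i', j') by rewrite -hq' -mem_shifted_boxes ssvalP.
rewrite /shifted_box /= => q'_box.
have q'_in : in_ideal (i', j') by rewrite -hq' in_ideal_val.
apply: val_inj; rewrite /= hq hq'.
have [lt_j | ge_j] := ltnP j j'.
  have end_le : i' + lp i' <= i + lp i by apply: row_end_nonincr; lia.
  have : in_ideal (i, j.+1) by apply: (in_ideal_down q'_in); rewrite /shifted_box /=; lia.
  by rewrite (negbTE right_out).
have [lt_i | ge_i] := ltnP i i'.
  have end_le : i' + lp i' <= i.+1 + lp i.+1 by apply: row_end_nonincr; lia.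
  have : in_ideal (i.+1, j) by apply: (in_ideal_down q'_in); rewrite /shifted_box /=; lia.
  by rewrite (negbTE below_out).
by congr pair; lia.
Qed.

Lemma togp_shiftE q : togp (@shift_le lam) q I =
  [&& ~~ in_ideal (ssval q), ((ssval q).2 == (ssval q).1) || in_ideal ((ssval q).1, (ssval q).2.-1)
    & ((ssval q).1 == 1) || in_ideal ((ssval q).1.-1, (ssval q).2)].
Proof.
case hq: (ssval q) => [i j] /=.
have : shifted_box (i, j) by rewrite -hq -mem_shifted_boxes ssvalP.
rewrite /shifted_box /= => q_box.
apply/togpP/idP => [[qI q_min] | /and3P [qI left_in above_in]].
  have below_in b (b_box : b \in shifted_boxes lam) :
      b.1 <= i -> b.2 <= j -> b != (i, j) -> in_ideal b.
    move=> le1 le2 ne; have /= -> := in_ideal_val (SeqSub b_box).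
    apply/negPn/negP => /q_min; rewrite /shift_le hq /= le1 le2 => /(_ isT) /(congr1 val).
    by rewrite /= hq => e; move: ne; rewrite e eqxx.
  rewrite -hq in_ideal_val qI /=; apply/andP; split.
    have [// | ne_ji] := eqVneq j i.
    have b_box : (i, j.-1) \in shifted_boxes lam by rewrite mem_shifted_boxes /shifted_box /=; lia.
    by rewrite (below_in _ b_box) ?orbT //= ?xpair_eqE; lia.
  have [// | ne_i1] := eqVneq i 1.
  have end_le : i + lp i <= i.-1 + lp i.-1 by apply: row_end_nonincr; lia.
  have b_box : (i.-1, j) \in shifted_boxes lam by rewrite mem_shifted_boxes /shifted_box /=; lia.
  by rewrite (below_in _ b_box) ?orbT //= ?xpair_eqE; lia.
split; first by rewrite -in_ideal_val hq.
move=> q' q'I; rewrite /shift_le hq /=.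
case hq': (ssval q') => [i' j'] /= /andP [le_i le_j].
have : shifted_box (i', j') by rewrite -hq' -mem_shifted_boxes ssvalP.
rewrite /shifted_box /= => q'_box.
have q'_out : ~~ in_ideal (i', j') by rewrite -hq' in_ideal_val.
apply: val_inj; rewrite /= hq hq'.
have [lt_i | ge_i] := ltnP i' i.
  move: above_in; rewrite (_ : (i == 1) = false) /=; last by lia.
  move=> above_in; have : in_ideal (i', j').
    by apply: (in_ideal_down above_in); rewrite /shifted_box /=; lia.
  by rewrite (negbTE q'_out).
have [lt_j | ge_j] := ltnP j' j.
  move: left_in; rewrite (_ : (j == i) = false) /=; last by lia.
  move=> left_in; have : in_ideal (i', j').
    by apply: (in_ideal_down left_in); rewrite /shifted_box /=; lia.
  by rewrite (negbTE q'_out).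
by congr pair; lia.
Qed.

End ShiftedShape.

Lemma sumr_iota_indicator1 (V : nzSemiRingType) a l c (P : pred nat) (f : nat -> V) :
  (forall j, P j -> j = c) ->
  (\sum_(j <- iota a l) f j * (P j)%:R = if P c && (a <= c < a + l)%N then f c else 0)%R.
Proof.
move=> P_c; elim: l a => [|l IH] a.
  by rewrite big_nil addn0; case: (P c); rewrite //=; case: leqP => //; lia.
rewrite /= big_cons IH.
have [Pa | nPa] := boolP (P a).
  by rewrite -(P_c a Pa) Pa mulr1 ltnn addr0 leqnn /=; case: ltnP => //; lia.
rewrite mulr0 add0r; case: (boolP (P c)) => //= Pc.
have ne_ca : c != a by apply: contraNneq nPa => <-.
by rewrite (_ : (a.+1 <= c < a.+1 + l)%N = (a <= c < a + l.+1)%N) //; lia.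
Qed.

(* Strict, and whenever row [i] sticks out beyond the end of a nonempty row
   [i + 1], the last box [(i + 1, i + lambda_(i+1))] of row [i + 1] lies on the
   antidiagonal through the last box [(1, lambda_1)] of the first row; so does
   the diagonal box of a last row with at least two boxes. *)
Definition shifted_balanced (lam : seq nat) : Prop :=
  [/\ 0 < part lam 1,
      forall i, 0 < i -> 0 < part lam i.+1 -> part lam i.+1 < part lam i,
      forall i, 0 < i -> 0 < part lam i.+1 -> part lam i.+1 + 2 <= part lam i ->
        i.+1 + (i + part lam i.+1) = part lam 1 + 1
    & forall i, 0 < i -> part lam i.+1 = 0 -> 2 <= part lam i -> i + i = part lam 1 + 1].

Section ToggleWeights.
Variable lam : seq nat.
Local Notation L := (size lam).
Local Notation lp := (part lam).
Local Notation N := (part lam 1).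
Hypothesis lam_nonempty : 0 < N.
Hypothesis lam_strict : forall i, 0 < i -> 0 < lp i.+1 -> lp i.+1 < lp i.
Hypothesis lam_overhang : forall i, 0 < i -> 0 < lp i.+1 -> lp i.+1 + 2 <= lp i ->
  i.+1 + (i + lp i.+1) = N + 1.
Hypothesis lam_last_row : forall i, 0 < i -> lp i.+1 = 0 -> 2 <= lp i -> i + i = N + 1.

Local Open Scope ring_scope.

(* Four times the toggle weight of the box [b]. *)
Definition weight (b : nat * nat) : int :=
  if b.1 == b.2 then (2 * b.1)%:Z - N%:Z - 3 else (2 * (b.1 + b.2))%:Z - (2 * N)%:Z - 4.

Variable I : {set shiftP lam}.
Hypothesis I_ideal : is_ideal (@shift_le lam) I.

Local Notation in_ideal := (in_ideal I).
Local Notation len := (row_length I).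

Definition toggle_term (b : nat * nat) : int :=
  (4 + weight b) * ([&& in_ideal b, ~~ in_ideal (b.1, b.2.+1) & ~~ in_ideal (b.1.+1, b.2)])%:R
  - weight b * ([&& ~~ in_ideal b, (b.2 == b.1) || in_ideal (b.1, b.2.-1)
                  & (b.1 == 1%N) || in_ideal (b.1.-1, b.2)])%:R.

Definition removable_term i : int :=
  if (0 < len i)%N && ~~ in_ideal (i.+1, (i + len i).-1)
  then 4 + weight (i, (i + len i).-1) else 0.

Definition addable_term i : int :=
  if (len i < lp i)%N && ((i == 1%N) || in_ideal (i.-1, i + len i))
  then - weight (i, i + len i) else 0.

Definition potential i : int := if len i == 0%N then (N + 1)%:Z else (2 * (len i + i))%:Z.

Lemma sum_row_toggle_terms i : (0 < i)%N ->
  \sum_(j <- iota i (lp i)) toggle_term (i, j) = removable_term i + addable_term i.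
Proof.
move=> i_gt0; have len_le := row_length_le I i.
rewrite /toggle_term /= sumrB.
rewrite (@sumr_iota_indicator1 _ _ _ ((i + len i).-1)); last by move=> j; rewrite !in_idealE; lia.
rewrite (@sumr_iota_indicator1 _ _ _ (i + len i)); last by move=> j; rewrite !in_idealE; lia.
have -> : [&& in_ideal (i, (i + len i).-1), ~~ in_ideal (i, (i + len i).-1.+1)
            & ~~ in_ideal (i.+1, (i + len i).-1)] && (i <= (i + len i).-1 < i + lp i)%N
          = (0 < len i)%N && ~~ in_ideal (i.+1, (i + len i).-1).
  by rewrite !in_idealE; lia.
have -> : [&& ~~ in_ideal (i, i + len i), (i + len i == i) || in_ideal (i, (i + len i).-1)
            & (i == 1%N) || in_ideal (i.-1, i + len i)] && (i <= i + len i < i + lp i)%N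
          = (len i < lp i)%N && ((i == 1%N) || in_ideal (i.-1, i + len i)).
  by rewrite !in_idealE; lia.
by rewrite /removable_term /addable_term; do 2 case: ifP; rewrite ?subr0 ?sub0r.
Qed.

Lemma row_telescoping i : (0 < i)%N ->
  removable_term i + addable_term i.+1 = potential i - potential i.+1.
Proof.
move=> i_gt0.
have len_le := row_length_le I i; have len_le' := row_length_le I i.+1.
have len_decr := @row_length_decr _ lam_strict I I_ideal i i_gt0.
have := lam_strict i_gt0; have := lam_overhang i_gt0; have := lam_last_row i_gt0.
rewrite /removable_term /addable_term /potential /weight /= !(in_idealE I_ideal) /=.
by repeat case: ifP; lia.
Qed.

Lemma sum_toggle_terms :
  \sum_(q : shiftP lam) ((4 + weight (ssval q)) * (togm (@shift_le lam) q I)%:R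
                        - weight (ssval q) * (togp (@shift_le lam) q I)%:R) = (N + 1)%:Z.
Proof.
transitivity (\sum_(q : shiftP lam) toggle_term (ssval q)).
  by apply: eq_bigr => q _; rewrite (togm_shiftE lam_strict I_ideal) (togp_shiftE lam_strict I_ideal).
rewrite sum_shiftP (eq_big_seq (fun i => removable_term i + addable_term i)); last first.
  by move=> i; rewrite mem_iota => i_in; apply: sum_row_toggle_terms; lia.
have len_empty : len L.+1 = 0%N.
  by apply/eqP; rewrite -leqn0 (leq_trans (row_length_le I _)) // /part nth_default.
have -> : iota 1 L = index_iota 1 L.+1 by rewrite /index_iota subn1.
have shift_addable : \sum_(1 <= i < L.+1) addable_term i
    = addable_term 1 + \sum_(1 <= i < L.+1) addable_term i.+1.
  rewrite -big_nat_recl // [RHS]big_nat_recr //= [X in _ + X](_ : _ = 0) ?addr0 //.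
  by rewrite /addable_term len_empty /part nth_default.
rewrite big_split /= shift_addable addrCA -big_split /=.
rewrite (eq_big_nat _ _ (F2 := fun i => - (potential i.+1 - potential i))); last first.
  by move=> i i_in; rewrite row_telescoping ?opprB //; lia.
rewrite sumrN telescope_sumr // opprB /potential len_empty /addable_term /weight /=.
by have := row_length_le I 1; repeat case: ifP; lia.
Qed.

End ToggleWeights.

Lemma shift_le_rank lam (x y : shiftP lam) : shift_le x y -> x != y ->
  ((ssval x).1 + (ssval x).2 < (ssval y).1 + (ssval y).2)%N.
Proof.
rewrite /shift_le -(inj_eq val_inj) /=.
by case: (ssval x) (ssval y) => [a b] [c d] /= /andP [le1 le2]; rewrite xpair_eqE; lia.
Qed.

Section ShiftedBalancedTCDE.
Variable R : realFieldType.
Local Open Scope ring_scope.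

Theorem shifted_balanced_tCDE lam : shifted_balanced lam ->
  tCDE (@shift_le lam) R /\
  expect (@shift_le lam) (uni (@shift_le lam) R) (fun I => (ddeg (@shift_le lam) I)%:R)
    = (part lam 1 + 1)%:R / 4%:R.
Proof.
case=> lam_nonempty lam_strict lam_overhang lam_last_row.
pose w (q : shiftP lam) : R := (weight lam (ssval q))%:~R.
apply: (tCDE_of_toggle_identity (w := fun q => w q / 4%:R)) => I; rewrite inE => I_ideal.
pose tm (q : shiftP lam) : R := (togm (@shift_le lam) q I)%:R.
pose tp (q : shiftP lam) : R := (togp (@shift_le lam) q I)%:R.
have ddegE : (ddeg (@shift_le lam) I)%:R = \sum_q tm q.
  by rewrite sumr_indicator (ddeg_card_togm (@shift_le_rank lam)) ?inE.
have identity : 4%:R * \sum_q tm q - \sum_q w q * (tp q - tm q) = (part lam 1 + 1)%:R.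
  have := congr1 (fun z : int => z%:~R : R)
    (sum_toggle_terms lam_nonempty lam_strict lam_overhang lam_last_row I_ideal).
  rewrite rmorph_sum /= -pmulrn => <-; rewrite mulr_sumr -sumrB.
  by apply: eq_bigr => q _; rewrite intrB !intrM intrD !rmorph_nat /tm /tp /w; ring.
rewrite ddegE [in RHS](eq_bigr (fun q => w q * (tp q - tm q) / 4%:R)) -?mulr_suml; last first.
  by move=> q _; rewrite mulrAC.
by move: identity; set A := \sum_q tm q; set B := \sum_q w q * _; lra.
Qed.

End ShiftedBalancedTCDE.

Lemma nth_padd s t i : nth 0 (padd s t) i = nth 0 s i + nth 0 t i.
Proof.
rewrite /padd; have [i_lt | i_ge] := ltnP i (maxn (size s) (size t)).
  by rewrite nth_mkseq.
by rewrite nth_default ?size_mkseq // !nth_default //; lia.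
Qed.

Lemma nth_delta n i : nth 0 (delta n) i = n - i.
Proof.
rewrite /delta; have [i_lt | i_ge] := ltnP i n; first by rewrite nth_mkseq.
by rewrite nth_default ?size_mkseq //; lia.
Qed.

Lemma nth_rect b a i : nth 0 (rect b a) i = if i < a then b else 0.
Proof. exact: nth_nseq. Qed.

Section BalancedPartition.
Variables (nu : seq nat) (k : nat).
Hypothesis nu_balanced : balanced nu k.
Local Notation v j := (nth 0 nu j).

Lemma balanced_nthS_le j : v j.+1 <= v j.
Proof.
have /and4P [/sortedP nu_sorted _ _ _] := nu_balanced.
have [j_lt | j_ge] := ltnP j.+1 (size nu); first exact: nu_sorted.
by rewrite nth_default.
Qed.

Lemma balanced_nth_le j j' : j <= j' -> v j' <= v j.
Proof.
move/subnK <-; elim: (j' - j) => [|d IH] //.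
by rewrite addSn; apply: leq_trans (balanced_nthS_le _) IH.
Qed.

Lemma balanced_nth0 : v 0 = k.
Proof. by have /and4P [_ _ /eqP <- _] := nu_balanced. Qed.

Lemma balanced_nth_eq0 j : k <= j -> v j = 0.
Proof.
move=> le_kj; apply/eqP; rewrite -leqn0 (leq_trans (balanced_nth_le le_kj)) // leqn0.
apply/contraT; rewrite -lt0n => vk_gt0.
(* then the first [k + 1] parts are positive, contradicting [plength nu = k] *)
have k_lt : k < size nu by rewrite ltnNge; apply: contraTN vk_gt0 => /(nth_default 0) ->.
have /eqP count_take : count (fun x => 0 < x) (take k.+1 nu) == k.+1.
  rewrite -[X in _ == X](size_takel k_lt) -all_count; apply/(all_nthP 0) => t.
  rewrite size_takel // => t_lt.
  by rewrite nth_take // (leq_trans vk_gt0) // balanced_nth_le.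
have /and4P [_ /eqP plength_nu _ _] := nu_balanced.
have : k.+1 <= plength nu.
  by rewrite /plength -(cat_take_drop k.+1 nu) count_cat count_take leq_addr.
by rewrite plength_nu ltnn.
Qed.

Lemma balanced_descent j : v j.+1 < v j -> j.+1 + v j.+1 = k.
Proof.
move=> descent; have [j_lt | j_ge] := ltnP j.+1 k.
  have /and4P [_ _ _ /allP /(_ j.+1)] := nu_balanced.
  by rewrite mem_iota /part /=; move=> /(_ ltac:(lia)) /implyP /(_ descent) /eqP.
have [k_lt | k_ge] := ltnP k j.+1; first by move: descent; rewrite (balanced_nth_eq0 (j := j)); lia.
by rewrite (balanced_nth_eq0 (j := j.+1)) //; lia.
Qed.

End BalancedPartition.

(* For [c > 0] the last row [n] has at least two boxes, and [c = n - 1 - k] puts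
   its diagonal box on the antidiagonal. *)
Lemma staircase_shifted_balanced n k nu c lam :
  k < n -> balanced nu k -> (c == 0) || (c == n - 1 - k) ->
  (forall i, 0 < i -> part lam i = n - i.-1 + nth 0 nu i.-1 + (if i.-1 < n then c else 0)) ->
  shifted_balanced lam /\ part lam 1 = n + k + c.
Proof.
move=> lt_kn nu_bal c_eq lamE.
have nthS_le := balanced_nthS_le nu_bal; have nth_eq0 := balanced_nth_eq0 nu_bal.
have descent := balanced_descent nu_bal; have nth0 := balanced_nth0 nu_bal.
have lam1 : part lam 1 = n + k + c by rewrite lamE //= nth0; case: ifP; lia.
split => //; rewrite /shifted_balanced lam1.
split => [|i i_gt0|i i_gt0|i i_gt0]; rewrite ?lamE //=; first lia.
- have := nthS_le i.-1; have := nth_eq0 i; have := nth_eq0 i.-1.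
  by rewrite prednK //; repeat case: ifP; lia.
- have := nthS_le i.-1; have := nth_eq0 i; have := nth_eq0 i.-1; have := descent i.-1.
  by rewrite prednK //; repeat case: ifP; lia.
- by have := nth_eq0 i; have := nth_eq0 i.-1; repeat case: ifP; lia.
Qed.

Local Open Scope ring_scope.

Theorem theorem5p2 (R : realFieldType) (n k : nat) (nu : seq nat) :
  (k < n)%N -> balanced nu k ->
  (let lam := padd (delta n) nu in
   tCDE (@shift_le lam) R /\
   expect (@shift_le lam) (uni (@shift_le lam) R) (fun I => (ddeg (@shift_le lam) I)%:R)
     = (n + 1 + k)%:R / 4%:R) /\
  (let lam := padd (padd (delta n) nu) (rect (n - 1 - k) n) in
   tCDE (@shift_le lam) R /\
   expect (@shift_le lam) (uni (@shift_le lam) R) (fun I => (ddeg (@shift_le lam) I)%:R)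
     = n%:R / 2%:R).
Proof.
move=> lt_kn nu_bal; split => lam.
- have [lam_bal lam1] : shifted_balanced lam /\ part lam 1 = (n + k + 0)%N.
    apply: (staircase_shifted_balanced lt_kn nu_bal) => // i _.
    by rewrite if_same addn0 /part nth_padd nth_delta.
  have [lam_tCDE ->] := shifted_balanced_tCDE R lam_bal.
  by rewrite lam1 addn0 addnAC.
- have [lam_bal lam1] : shifted_balanced lam /\ part lam 1 = (n + k + (n - 1 - k))%N.
    apply: (staircase_shifted_balanced lt_kn nu_bal) => [|i _]; first by rewrite eqxx orbT.
    by rewrite /part !nth_padd nth_delta nth_rect.
  have [lam_tCDE ->] := shifted_balanced_tCDE R lam_bal.
  have -> : (part lam 1 + 1 = n * 2)%N by rewrite lam1; lia.
  by rewrite natrM; split => //; lra.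
Qed.
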